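(* Let $R$ be a commutative ring, $S$ a subring of $R$, $I$ an ideal of $S$, $n\ge1$, and $f\in R[x]$. The following are equivalent: (1) $f\in \mathrm{Int}_R(T_n(S),T_n(I))$; (2) for all $1\le i\le j\le n$, $\langle f,p_{ij}\rangle\in \mathrm{Int}(S^{\ast},I)$; (3) for every $0\le k\le n-1$ there exists $i\in\mathbb{N}$ with $\langle f,p_{i,\,i+k}\rangle\in\mathrm{Int}(S^{\ast},I)$.
   Context: $\mathbb{N}=\{1,2,3,\dots\}$. For a ring $A$, $T_n(A)$ denotes the ring of upper triangular $n\times n$ matrices with entries in $A$. For $g\in R[x]$ and a square matrix $C$ over $R$, $g(C)$ is the usual evaluation. $\mathrm{Int}_R(T_m(S),T_m(I))=\{g\in R[x]\mid \forall C\in T_m(S):\ g(C)\in T_m(I)\}$. Let $R[X]=R[\{x_{ab}\mid a,b\in\mathbb{N}\}]$ be the polynomial ring in independent commuting variables $x_{ab}$. Path polynomials: for $1\le i\le j$ and $k>0$, $p_{ij}^{(k)}=\sum_{i=i_1\le i_2\le\dots\le i_{k+1}=j} x_{i_1i_2}x_{i_2i_3}\cdots x_{i_ki_{k+1}}$; for $1\le i\le j$, $p_{ij}^{(0)}=\delta_{ij}$; for $i>j$, $p_{ij}^{(k)}=0$ for all $k$. Write $p_{ij}=(p_{ij}^{(k)})_{k\ge0}$. For $f=\sum_k f_kx^k\in R[x]$ set $\langle f,p_{ij}\rangle=\sum_{k\ge0} f_k\,p_{ij}^{(k)}\in R[X]$. $\mathrm{Int}(S^{\ast},I)$ denotes the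 set of polynomials in $R[X]$ that take values in $I$ whenever elements of $S$ are substituted (independently) for all the variables. *)

From HB Require Import structures.
From mathcomp Require Import all_boot all_order all_algebra.
Set Implicit Arguments. Unset Strict Implicit. Unset Printing Implicit Defensive.
Import Order.TTheory GRing.Theory Num.Theory.
Local Open Scope ring_scope.

Section Defs.
Variable R : comNzRingType.

Definition is_subring (S : {pred R}) : Prop :=
  [/\ 1 \in S, {in S &, forall a b, a - b \in S} & {in S &, forall a b, a * b \in S}].

Definition is_ideal_of (S I : {pred R}) : Prop :=
  [/\ {subset I <= S}, 0 \in I, {in I &, forall a b, a - b \in I}
    & {in S & I, forall s a, s * a \in I}].

Definition upper_tri_over (A : {pred R}) (m : nat) (C : 'M[R]_m) : Prop :=
  forall i j : 'I_m, ((j < i)%N -> C i j = 0) /\ C i j \in A.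

(* Int_R(T_m(S), T_m(I)), for m = n.+1 (so that 'M_m is a ring) *)
Definition IntR_T (S I : {pred R}) (n : nat) (g : {poly R}) : Prop :=
  forall C : 'M[R]_n.+1, upper_tri_over S C -> upper_tri_over I (horner_mx C g).

(* Value of the path polynomial p_ij^(k) at the assignment x_ab := x a b
   (indices are 1-based as in the paper; p^(k+1)_ij = sum_{i<=l<=j} x_il p^(k)_lj,
   p^(0)_ij = delta_ij, and everything vanishes for i > j). *)
Fixpoint path_ev (x : nat -> nat -> R) (i j k : nat) : R :=
  match k with
  | 0 => (i == j)%:R
  | k'.+1 => \sum_(i <= l < j.+1) x i l * path_ev x l j k'
  end.

Definition pair_ev (f : {poly R}) (x : nat -> nat -> R) (i j : nat) : R :=
  \sum_(k < size f) f`_k * path_ev x i j k.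

(* <f, p_ij> \in Int(S^*, I): all substitutions of elements of S for the
   variables x_ab give values in I *)
Definition in_Int_star (S I : {pred R}) (f : {poly R}) (i j : nat) : Prop :=
  forall x : nat -> nat -> R, (forall a b, x a b \in S) -> pair_ev f x i j \in I.

End Defs.

From HB Require Import structures.
From mathcomp Require Import all_boot all_order all_algebra zify.
Set Implicit Arguments.
Unset Strict Implicit.
Unset Printing Implicit Defensive.
Import Order.TTheory GRing.Theory Num.Theory.
Local Open Scope ring_scope.

(* For an upper triangular matrix C, the (i, j) entry of C^k is the path
   polynomial p_ij^(k) evaluated at the entries of C, hence the (i, j) entry
   of f(C) is <f, p_ij> evaluated there; since every assignment of the
   variables is realised on the upper triangle of some C in T_n(S), this
   gives (1) <-> (2).  Renaming x_ab to x_(a+d)(b+d) turns p_ij into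
   p_(i+d)(j+d), so whether <f, p_(i,i+k)> lies in Int(S^*, I) does not
   depend on i, which gives (2) <-> (3). *)

Lemma big_ord_supported (R : nmodType) (N m p : nat) (F : nat -> R) :
  (p <= N)%N -> (forall i, (i < N)%N -> ~~ (m <= i < p)%N -> F i = 0) ->
  \sum_(i < N) F i = \sum_(m <= i < p) F i.
Proof.
move=> pN F0.
rewrite (big_nat_widen _ _ _ _ _ pN) (big_nat_widenl _ _ _ _ _ (leq0n m)).
rewrite big_mkord [RHS]big_mkcond /=; apply: eq_bigr => i _.
by rewrite andbC; case: ifPn => // /F0 ->.
Qed.

Section PathPolynomials.
Variable R : comNzRingType.
Implicit Types (x y : nat -> nat -> R) (f : {poly R}).

Lemma eq_path_ev x y : x =2 y -> forall i j k, path_ev x i j k = path_ev y i j k.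
Proof.
move=> exy i j k; elim: k i j => [//|k IH] i j /=.
by apply: eq_bigr => l _; rewrite exy IH.
Qed.

Lemma path_ev_gt x i j k : (j < i)%N -> path_ev x i j k = 0.
Proof. by case: k => [|k] /= ji; [rewrite gtn_eqF | rewrite big_geq]. Qed.

Lemma path_ev_addn x d i j k :
  path_ev x (i + d) (j + d) k = path_ev (fun p q => x (p + d) (q + d)) i j k.
Proof.
elim: k i j => [|k IH] i j /=; first by rewrite eqn_add2r.
by rewrite big_addn -addSn addnK; apply: eq_bigr => l _; rewrite IH.
Qed.

Lemma eq_pair_ev f x y : x =2 y -> forall i j, pair_ev f x i j = pair_ev f y i j.
Proof. by move=> exy i j; apply: eq_bigr => k _; rewrite (eq_path_ev exy). Qed.

Lemma pair_ev_gt f x i j : (j < i)%N -> pair_ev f x i j = 0.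
Proof. by move=> ji; apply: big1 => k _; rewrite path_ev_gt ?mulr0. Qed.

Lemma pair_ev_addn f x d i j :
  pair_ev f x (i + d) (j + d) = pair_ev f (fun p q => x (p + d) (q + d)) i j.
Proof. by apply: eq_bigr => k _; rewrite path_ev_addn. Qed.

Section UpperTriangular.
Variables (n : nat) (C : 'M[R]_n.+1) (x : nat -> nat -> R).
Hypothesis C_upper : forall a b : 'I_n.+1, (b < a)%N -> C a b = 0.
Hypothesis x_C : forall a b : 'I_n.+1, (a <= b)%N -> x a.+1 b.+1 = C a b.

Lemma upper_mx_expE k (a b : 'I_n.+1) : (C ^+ k) a b = path_ev x a.+1 b.+1 k.
Proof.
elim: k a b => [|k IH] a b; first by rewrite expr0 mxE.
rewrite exprS mxE /= big_add1 /=.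
pose F l := (if (a <= l)%N then x a.+1 l.+1 else 0) * path_ev x l.+1 b.+1 k.
have CF l : C a l * (C ^+ k) l b = F l.
  rewrite IH /F; case: leqP => [al | la]; first by rewrite x_C.
  by rewrite C_upper.
rewrite (eq_bigr (F \o val)) => [|l _]; last exact: CF.
rewrite (big_ord_supported (m := a) (p := b.+1)) ?ltn_ord // => [|l _].
  by apply: eq_big_nat => l /andP[al _]; rewrite /F al.
rewrite /F; case: (leqP a l) => //= al; last by rewrite mul0r.
by rewrite -leqNgt => bl; rewrite path_ev_gt ?mulr0.
Qed.

Lemma upper_horner_mxE f (a b : 'I_n.+1) :
  horner_mx C f a b = pair_ev f x a.+1 b.+1.
Proof.
rewrite -{1}(coefK f) poly_def linear_sum summxE; apply: eq_bigr => k _.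
by rewrite linearZ rmorphXn /= horner_mx_X mxE upper_mx_expE.
Qed.

End UpperTriangular.
End PathPolynomials.

Section IntegerValued.
Variables (R : comNzRingType) (S I : {pred R}) (f : {poly R}).

Lemma in_Int_star_addn d i j :
  in_Int_star S I f (i + d) (j + d) <-> in_Int_star S I f i j.
Proof.
split=> H x xS; last by rewrite pair_ev_addn; apply: H.
pose y p q := x (p - d)%N (q - d)%N.
have -> : pair_ev f x i j = pair_ev f y (i + d) (j + d).
  by rewrite pair_ev_addn; apply: eq_pair_ev => p q; rewrite /y !addnK.
by apply: H => p q; apply: xS.
Qed.

Lemma in_Int_star_diagE i k :
  in_Int_star S I f i (i + k) <-> in_Int_star S I f 0 k.
Proof. by rewrite addnC -{1}[i]add0n; apply: in_Int_star_addn. Qed.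

Lemma IntR_T_in_Int_star n : 0 \in S -> IntR_T S I n f ->
  forall a b : 'I_n.+1, in_Int_star S I f a.+1 b.+1.
Proof.
move=> S0 fST a b x xS.
pose C : 'M[R]_n.+1 := \matrix_(p, q) if (p <= q)%N then x p.+1 q.+1 else 0.
have C_upper (p q : 'I_n.+1) : (q < p)%N -> C p q = 0.
  by move=> qp; rewrite mxE leqNgt qp.
have x_C (p q : 'I_n.+1) : (p <= q)%N -> x p.+1 q.+1 = C p q.
  by rewrite mxE => ->.
have C_tri : upper_tri_over S C.
  by move=> p q; split; [exact: C_upper | rewrite mxE; case: ifP].
by have [_] := fST C C_tri a b; rewrite (upper_horner_mxE C_upper x_C).
Qed.

Lemma in_Int_star_IntR_T n : 0 \in I ->
  (forall a b : 'I_n.+1, (a <= b)%N -> in_Int_star S I f a.+1 b.+1) ->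
  IntR_T S I n f.
Proof.
move=> I0 fSI C C_tri a b.
pose x p q := C (inord p.-1) (inord q.-1).
have C_upper (p q : 'I_n.+1) : (q < p)%N -> C p q = 0 by case: (C_tri p q).
have x_C (p q : 'I_n.+1) : (p <= q)%N -> x p.+1 q.+1 = C p q.
  by rewrite /x /= !inord_val.
rewrite (upper_horner_mxE C_upper x_C); split=> [ba | ]; first exact: pair_ev_gt.
have [ba | ab] := ltnP b a; first by rewrite pair_ev_gt.
by apply: fSI => // p q; case: (C_tri (inord p.-1) (inord q.-1)).
Qed.

End IntegerValued.

Theorem proposition2p10 (R : comNzRingType) (S I : {pred R})
    (hS : is_subring S) (hI : is_ideal_of S I) (n : nat) (f : {poly R}) :
  let P1 := IntR_T S I n f in
  let P2 := forall i j : nat, (1 <= i)%N -> (i <= j)%N -> (j <= n.+1)%N -> in_Int_star S I f i j in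
  let P3 := forall k : nat, (k <= n)%N -> exists2 i : nat, (1 <= i)%N & in_Int_star S I f i (i + k) in
  (P1 <-> P2) /\ (P2 <-> P3).
Proof.
move=> P1 P2 P3; case: hS => S1 SB _; case: hI => _ I0 _ _.
have S0 : 0 \in S by rewrite -(subrr 1) SB.
have P2E : P2 <-> forall a b : 'I_n.+1, (a <= b)%N -> in_Int_star S I f a.+1 b.+1.
  split=> [fSI a b ab | fSI i j i1 ij jn]; first by apply: fSI; rewrite ?ltn_ord.
  have [-> ->] : i = (inord i.-1 : 'I_n.+1).+1 /\ j = (inord j.-1 : 'I_n.+1).+1.
    by rewrite !inordK; lia.
  by apply: fSI; rewrite !inordK; lia.
split; split.
- by move=> /(IntR_T_in_Int_star S0) fSI; apply/P2E => a b _.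
- by move/P2E; apply: in_Int_star_IntR_T.
- by move=> fSI k kn; exists 1%N => //; apply: fSI; lia.
- move=> fSI i j i1 ij jn.
  have /fSI[i0 _ /in_Int_star_diagE fSI0] : (j - i <= n)%N by lia.
  by rewrite -(subnKC ij); apply/in_Int_star_diagE.
Qed.
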